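(* Let $G$ be a finite group acting linearly, isometrically and effectively on $M=\mathbb{R}^n$. Let $X$ be a random variable in $\mathbb{R}^n$ whose law is absolutely continuous with respect to Lebesgue measure, with $\mathbb{E}(\|X\|^2)<+\infty$, and assume that $t_0=\mathbb{E}(X)$ is a regular point. If $$\mathbb{P}\big(X\notin \mathrm{Cone}(t_0)\big)>0,$$ then $[t_0]$ is not a Fréchet mean of $[X]$.
   Context: $\mathbb{R}^n$ carries the Euclidean inner product $\langle\cdot,\cdot\rangle$ and norm $\|\cdot\|$. A group $G$ acts on $M$ via $(g,m)\mapsto g\cdot m$ with $(gg')\cdot m=g\cdot(g'\cdot m)$ and $e_G\cdot m=m$; the action is linear and isometric if each $x\mapsto g\cdot x$ is linear with $\|g\cdot x\|=\|x\|$, and effective if $x\mapsto g\cdot x$ is the identity map only for $g=e_G$. The orbit of $m$ is $[m]=\{g\cdot m: g\in G\}$ and the quotient distance is $d_Q([a],[b])=\inf_{g\in G}\|g\cdot a-b\|$. A point $m$ is regular if $\{g\in G: g\cdot m=m\}=\{e_G\}$. For a regular $m$, $\mathrm{Cone}(m)=\{x\in\mathbb{R}^n: \|x-m\|\le\|x-g\cdot m\| \text{ for all } g\in G\}$. The variance of $[X]$ is $F(m)=\mathbb{E}\big(\min_{g\in G}\|g\cdot X-m\|^2\big)=\mathbb{E}(d_Q([m],[X])^2)$ for $m\in M$; an orbit $[m_\star]$ is a Fréchet mean of $[X]$ if $m_\star$ is a global minimiser of $F$. *)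

(* R^n is modelled as row vectors 'rV[R]_n over R : realType. *)
From HB Require Import structures.
From mathcomp Require Import all_boot all_order all_algebra all_fingroup.
From mathcomp Require Import all_classical all_reals all_analysis.
Set Implicit Arguments. Unset Strict Implicit. Unset Printing Implicit Defensive.
Import Order.TTheory GRing.Theory Num.Theory.
Local Open Scope classical_set_scope.
Local Open Scope ring_scope.

Section Defs.
Variables (R : realType) (n : nat).

Definition edot (u v : 'rV[R]_n) : R := \sum_(i < n) u 0 i * v 0 i.
Definition enorm (u : 'rV[R]_n) : R := Num.sqrt (edot u u).

Definition box (a b : 'rV[R]_n) : set 'rV[R]_n :=
  [set x | forall i : 'I_n, a 0 i <= x 0 i <= b 0 i].
Definition box_vol (a b : 'rV[R]_n) : R := \prod_(i < n) (b 0 i - a 0 i).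

Definition lebesgue_null (A : set 'rV[R]_n) : Prop :=
  forall eps : R, 0 < eps ->
  exists a b : nat -> 'rV[R]_n,
    [/\ (forall k (i : 'I_n), a k 0 i <= b k 0 i),
        A `<=` \bigcup_k box (a k) (b k)
      & forall N, \sum_(k < N) box_vol (a k) (b k) <= eps].

Variable gT : finGroupType.
Variable act : gT -> 'rV[R]_n -> 'rV[R]_n.

Definition is_group_action : Prop :=
  (forall x, act 1%g x = x) /\ (forall g h x, act (g * h)%g x = act g (act h x)).
Definition act_linear : Prop :=
  forall g (a : R) (x y : 'rV[R]_n), act g (a *: x + y) = a *: act g x + act g y.
Definition act_isometric : Prop := forall g x, enorm (act g x) = enorm x.
Definition act_effective : Prop := forall g, (forall x, act g x = x) -> g = 1%g.

Definition regular_point (m : 'rV[R]_n) : Prop :=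
  forall g, act g m = m -> g = 1%g.

Definition Cone (m : 'rV[R]_n) : set 'rV[R]_n :=
  [set x | forall g : gT, enorm (x - m) <= enorm (x - act g m)].

(* squared quotient distance  d_Q([a],[b])^2 = min_g ||g.a - b||^2 *)
Definition dQ2 (a b : 'rV[R]_n) : R :=
  \big[Num.min/enorm (act 1%g a - b) ^+ 2]_(g : gT) (enorm (act g a - b) ^+ 2).

Context d (T : measurableType d) (P : probability T R).
Variable X : T -> 'rV[R]_n.

Definition random_vector : Prop :=
  forall i : 'I_n, measurable_fun [set: T] (fun w => X w 0 i).

Definition law_abs_cont : Prop :=
  forall A, lebesgue_null A -> P.-negligible (X @^-1` A).

Definition finite_second_moment : Prop :=
  P.-integrable [set: T] (fun w => (enorm (X w) ^+ 2)%:E).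

Definition expect_vec : 'rV[R]_n :=
  \row_(i < n) fine (\int[P]_w (X w 0 i)%:E).

Definition frechet_F (m : 'rV[R]_n) : \bar R :=
  \int[P]_w (dQ2 (X w) m)%:E.

Definition is_frechet_mean (m : 'rV[R]_n) : Prop :=
  forall m' : 'rV[R]_n, (frechet_F m <= frechet_F m')%E.

End Defs.

From HB Require Import structures.
From mathcomp Require Import all_boot all_order all_algebra all_fingroup.
From mathcomp Require Import all_classical all_reals all_analysis.
From mathcomp Require Import ring lra measurable_realfun.
Import Order.TTheory GRing.Theory Num.Theory.
Set Implicit Arguments. Unset Strict Implicit. Unset Printing Implicit Defensive.
Local Open Scope classical_set_scope.
Local Open Scope ring_scope.

(* Write t for E X, Q = ||X - t||^2 and D = min_g ||g.X - t||^2 = d_Q([X],[t])^2.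
   Then D <= Q, strictly exactly when X is outside Cone(t), so kappa = E(Q - D) > 0.
   If g realises D(X), then since ||g.X|| = ||X|| we have Q - D = 2<g.X - X, t>, and
   expanding ||g.X - (1+e)t||^2 gives
     d_Q([X],[(1+e)t])^2 <= D - e (Q - D) - 2e <X - t, t> + e^2 ||t||^2.
   The middle term has expectation 0 because t = E X, hence
   F((1+e)t) <= F(t) - e kappa + e^2 ||t||^2 < F(t) for small e > 0. *)

Lemma normr_le1Dsqr (R : realDomainType) (x : R) : `|x| <= 1 + x ^+ 2.
Proof. by rewrite -real_normK ?num_real //; have := normr_ge0 x; nra. Qed.

Section Euclid.
Variables (R : realType) (n : nat).
Implicit Types u v : 'rV[R]_n.

Lemma edot_ge0 u : 0 <= edot u u.
Proof. by apply: sumr_ge0 => i _; rewrite -expr2 sqr_ge0. Qed.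

Lemma sqr_enorm u : enorm u ^+ 2 = edot u u.
Proof. by rewrite sqr_sqrtr // edot_ge0. Qed.

Lemma le_enorm u v : (enorm u <= enorm v) = (edot u u <= edot v v).
Proof. by rewrite ler_sqrt // edot_ge0. Qed.

Lemma lt_enorm u v : (enorm u < enorm v) = (edot u u < edot v v).
Proof. by rewrite !ltNge le_enorm. Qed.

Lemma edot_subZr u v (s : R) :
  edot (u - s *: v) (u - s *: v) = edot u u - 2 * s * edot u v + s ^+ 2 * edot v v.
Proof.
rewrite /edot !mulr_sumr -sumrB -big_split /=; apply: eq_bigr => i _.
by rewrite !mxE; ring.
Qed.

Lemma edot_sub u v : edot (u - v) (u - v) = edot u u - 2 * edot u v + edot v v.
Proof. by have := edot_subZr u v 1; rewrite scale1r mulr1 expr1n mul1r. Qed.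

Lemma sqr_coord_le_edot u i : u 0 i ^+ 2 <= edot u u.
Proof.
rewrite /edot (bigD1 i) //= expr2 lerDl.
by apply: sumr_ge0 => j _; rewrite -expr2 sqr_ge0.
Qed.

End Euclid.

Section Action.
Variables (R : realType) (n : nat) (gT : finGroupType).
Variable act : gT -> 'rV[R]_n -> 'rV[R]_n.
Hypotheses (act_group : is_group_action act) (act_lin : act_linear act)
  (act_iso : act_isometric act).

Lemma act_add g x y : act g (x + y) = act g x + act g y.
Proof. by have := act_lin g 1 x y; rewrite !scale1r. Qed.

Lemma act0 g : act g 0 = 0.
Proof. by have := act_add g 0 0; rewrite addr0 -{1}[act g 0]addr0 => /addrI. Qed.

Lemma act_sub g x y : act g (x - y) = act g x - act g y.
Proof. by have := act_lin g (-1) y x; rewrite !scaleN1r !(addrC (- _)). Qed.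

Lemma act_coord g x i :
  act g x 0 i = \sum_(j < n) x 0 j * act g (delta_mx 0 j) 0 i.
Proof.
rewrite {1}(row_sum_delta x) (big_morph (act g) (act_add g) (act0 g)) summxE.
apply: eq_bigr => j _.
have := act_lin g (x 0 j) (delta_mx 0 j) 0.
by rewrite !addr0 act0 addr0 => ->; rewrite mxE.
Qed.

Lemma edot_act g x : edot (act g x) (act g x) = edot x x.
Proof. by rewrite -!sqr_enorm act_iso. Qed.

Lemma enorm_subV g x t : enorm (x - act g^-1 t) = enorm (act g x - t).
Proof.
case: act_group => act1 actM.
by rewrite -(act_iso g) act_sub -actM mulgV act1.
Qed.

Lemma dQ2_attained x t : exists g, dQ2 act x t = enorm (act g x - t) ^+ 2.
Proof.
apply: (big_ind (fun y => exists g, y = enorm (act g x - t) ^+ 2)).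
- by exists 1%g.
- move=> _ _ [g ->] [h ->].
  by case: leP => _; [exists g | exists h].
- by move=> g _; exists g.
Qed.

Lemma dQ2_le x t g : dQ2 act x t <= enorm (act g x - t) ^+ 2.
Proof. exact: bigmin_le. Qed.

Lemma dQ2_ge0 x t : 0 <= dQ2 act x t.
Proof. by have [g ->] := dQ2_attained x t; rewrite sqr_ge0. Qed.

Lemma dQ2_le_edot x t : dQ2 act x t <= edot (x - t) (x - t).
Proof. by have := dQ2_le x t 1%g; case: act_group => -> _; rewrite sqr_enorm. Qed.

Lemma notCone_dQ2_lt x t : ~ Cone act t x <-> dQ2 act x t < edot (x - t) (x - t).
Proof.
split.
- move=> /existsNP [g /negP]; rewrite -ltNge => gx_closer.
  apply: le_lt_trans (dQ2_le x t g^-1) _.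
  by move: gx_closer; rewrite -enorm_subV invgK lt_enorm sqr_enorm.
- move=> dQ2_lt xC; have [g dQ2E] := dQ2_attained x t.
  move: (xC g^-1%g); rewrite enorm_subV le_enorm -(sqr_enorm (act g x - t)) -dQ2E.
  by rewrite leNgt dQ2_lt.
Qed.

Lemma dQ2_scale_le x t e :
  dQ2 act x ((1 + e) *: t) <=
  dQ2 act x t - e * (edot (x - t) (x - t) - dQ2 act x t)
  - 2 * e * (edot x t - edot t t) + e ^+ 2 * edot t t.
Proof.
have [g dQ2E] := dQ2_attained x t.
apply: le_trans (dQ2_le _ _ g) _.
rewrite dQ2E !sqr_enorm edot_subZr !edot_sub edot_act.
by rewrite le_eqVlt; apply/predU1P; left; ring.
Qed.

End Action.

Lemma measurable_bigmin d (T : measurableType d) (R : realType) (I : Type)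
    (s : seq I) (F : I -> T -> R) (f0 : T -> R) :
  measurable_fun setT f0 -> (forall i, measurable_fun setT (F i)) ->
  measurable_fun setT (fun w => \big[Num.min/f0 w]_(i <- s) F i w).
Proof.
move=> mf0 mF; elim: s => [|i s IHs].
  by under eq_fun do rewrite big_nil.
by under eq_fun do rewrite big_cons; exact: measurable_minr.
Qed.

Section RealIntegrable.
Context d (T : measurableType d) (R : realType) (mu : {measure set T -> \bar R}).
Local Notation integrable f := (mu.-integrable setT (EFin \o f)).
Implicit Types f g : T -> R.

Lemma integrableD_EFin f g : integrable f -> integrable g -> integrable (f \+ g).
Proof.
by move=> intf intg; apply: eq_integrable (integrableD measurableT intf intg). Qed.

Lemma integrableZl_EFin k f : integrable f -> integrable (fun w => k * f w).
Proof.
by move=> intf; apply: eq_integrable (integrableZl measurableT k intf). Qed.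

Lemma integrableB_EFin f g : integrable f -> integrable g -> integrable (f \- g).
Proof.
by move=> intf intg; apply: eq_integrable (integrableB measurableT intf intg). Qed.

Lemma integrable_sum_EFin (I : Type) (s : seq I) (F : I -> T -> R) :
  (forall i, integrable (F i)) -> integrable (fun w => \sum_(i <- s) F i w).
Proof.
move=> intF; have := integrable_sum measurableT s (P := xpredT) (fun i _ => intF i).
by apply: eq_integrable => // w _; rewrite /= sumEFin.
Qed.

Lemma Rintegral_sum (I : Type) (s : seq I) (F : I -> T -> R) :
  (forall i, integrable (F i)) ->
  \int[mu]_w (\sum_(i <- s) F i w) = \sum_(i <- s) \int[mu]_w F i w.
Proof.
move=> intF; elim: s => [|i s IHs].
  by under eq_Rintegral do rewrite big_nil; rewrite Rintegral_cst // mul0r big_nil.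
under eq_Rintegral do rewrite big_cons.
by rewrite RintegralD //; [rewrite IHs big_cons | exact: integrable_sum_EFin].
Qed.

Lemma Rintegral_gt0 f : integrable f -> (forall w, 0 <= f w) ->
  (0 < mu [set w | 0 < f w]%R)%E -> 0 < \int[mu]_w f w.
Proof.
move=> intf f_ge0 pos_gt0; rewrite lt0r Rintegral_ge0 // andbT.
apply/eqP => int0; move: pos_gt0; rewrite lt0e => /andP[/eqP + _]; apply.
have [mf _] := integrableP _ _ _ intf.
have : (\int[mu]_w `|(f w)%:E| = 0)%E.
  under eq_integral do rewrite gee0_abs ?lee_fin //.
  by rewrite -[LHS]fineK ?integrable_fin_num // -/(Rintegral _ _ _) int0.
move/(ae_eq_integral_abs mu measurableT mf) => [N [mN muN0 f0_off_N]].
apply/eqP; rewrite -measure_le0 -muN0 le_measure ?inE //.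
- rewrite -[X in measurable X]setTI -preimage_itvoy.
  exact: (measurable_EFinP _ _).1 mf measurableT _ (measurable_itv _).
- move=> w f_gt0; apply: f0_off_N => /(_ Logic.I) [f0].
  by move: f_gt0; rewrite /= f0 ltxx.
Qed.

End RealIntegrable.

Section FrechetVariance.
Variables (R : realType) (n : nat) (gT : finGroupType).
Variable act : gT -> 'rV[R]_n -> 'rV[R]_n.
Hypotheses (act_group : is_group_action act) (act_lin : act_linear act)
  (act_iso : act_isometric act).
Variables (d : measure_display) (T : measurableType d) (P : probability T R).
Variable X : T -> 'rV[R]_n.
Hypotheses (X_rv : random_vector X) (X_L2 : finite_second_moment P X).
Local Notation integrable f := (P.-integrable setT (EFin \o f)).

Lemma measurable_act_coord g i : measurable_fun setT (fun w => act g (X w) 0 i).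
Proof.
under eq_fun do rewrite (act_coord act_lin).
by apply: measurable_sum => j; exact: measurable_funM (X_rv j) (measurable_cst _).
Qed.

Lemma measurable_edot_sub (V : T -> 'rV[R]_n) m :
  (forall i, measurable_fun setT (fun w => V w 0 i)) ->
  measurable_fun setT (fun w => edot (V w - m) (V w - m)).
Proof.
move=> mV; apply: measurable_sum => i; under eq_fun do rewrite !mxE.
by apply: measurable_funM; apply: measurable_funB => //; exact: measurable_cst.
Qed.

Lemma measurable_dQ2 m : measurable_fun setT (fun w => dQ2 act (X w) m).
Proof.
have msqr g : measurable_fun setT (fun w => enorm (act g (X w) - m) ^+ 2).
  under eq_fun do rewrite sqr_enorm.
  by apply: measurable_edot_sub => i; exact: measurable_act_coord.
exact: measurable_bigmin (msqr 1%g) msqr.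
Qed.

Lemma integrable_cst (c : R) : integrable (fun=> c).
Proof. exact: finite_measure_integrable_cst. Qed.

Lemma Rintegral_cst1 (c : R) : \int[P]_w c = c.
Proof.
by rewrite Rintegral_cst // [X in fine X](_ : _ = 1%E) ?mulr1 //; exact: probability_setT.
Qed.

Lemma integrable_edot_self : integrable (fun w => edot (X w) (X w)).
Proof. by apply: eq_integrable X_L2 => // w _; rewrite /= sqr_enorm. Qed.

Lemma integrable_coord i : integrable (fun w => X w 0 i).
Proof.
apply: le_integrable (integrableD_EFin (integrable_cst 1) integrable_edot_self) => //.
  exact/measurable_EFinP.
move=> w _; rewrite /= lee_fin [X in _ <= X]ger0_norm ?addr_ge0 ?edot_ge0 //.
by apply: le_trans (normr_le1Dsqr _) _; rewrite lerD2l sqr_coord_le_edot.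
Qed.

Lemma integrable_edot m : integrable (fun w => edot (X w) m).
Proof.
apply: integrable_sum_EFin => i; under eq_fun do rewrite mulrC.
exact: integrableZl_EFin (integrable_coord i).
Qed.

Lemma integrable_edot_sub m : integrable (fun w => edot (X w - m) (X w - m)).
Proof.
under eq_fun do rewrite edot_sub.
apply: integrableD_EFin (integrable_cst _).
exact: integrableB_EFin integrable_edot_self (integrableZl_EFin 2 (integrable_edot m)).
Qed.

Lemma integrable_dQ2 m : integrable (fun w => dQ2 act (X w) m).
Proof.
apply: le_integrable (integrable_edot_sub m) => //.
  exact/measurable_EFinP/measurable_dQ2.
move=> w _; rewrite /= lee_fin !ger0_norm ?dQ2_ge0 ?edot_ge0 //.
exact: dQ2_le_edot.
Qed.

Lemma Rintegral_edot m : \int[P]_w edot (X w) m = edot (expect_vec P X) m.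
Proof.
rewrite Rintegral_sum => [|i]; last first.
  by under eq_fun do rewrite mulrC; exact: integrableZl_EFin (integrable_coord i).
apply: eq_bigr => i _; rewrite mxE -RintegralZr //; exact: integrable_coord.
Qed.

Lemma frechet_FE m : frechet_F act P X m = (\int[P]_w dQ2 act (X w) m)%:E.
Proof. by rewrite fineK //; exact: integrable_fin_num (integrable_dQ2 m). Qed.

Lemma cone_gap_gt0 m : (0 < P [set w | ~ Cone act m (X w)])%E ->
  0 < \int[P]_w (edot (X w - m) (X w - m) - dQ2 act (X w) m).
Proof.
move=> notCone_gt0; apply: Rintegral_gt0.
- exact: integrableB_EFin (integrable_edot_sub m) (integrable_dQ2 m).
- by move=> w; rewrite subr_ge0 dQ2_le_edot.
- suff -> : [set w | 0 < edot (X w - m) (X w - m) - dQ2 act (X w) m]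
            = [set w | ~ Cone act m (X w)] by [].
  apply: eq_set => w; rewrite subr_gt0.
  by apply: propext; apply: iff_sym; exact: notCone_dQ2_lt.
Qed.

Local Notation t := (expect_vec P X).

Lemma Rintegral_edot_centered : \int[P]_w (edot (X w) t - edot t t) = 0.
Proof.
rewrite RintegralB ?integrable_edot ?integrable_cst //.
by rewrite Rintegral_edot Rintegral_cst1 subrr.
Qed.

Lemma Rintegral_dQ2_scale_le e :
  \int[P]_w dQ2 act (X w) ((1 + e) *: t) <=
  \int[P]_w dQ2 act (X w) t
  - e * \int[P]_w (edot (X w - t) (X w - t) - dQ2 act (X w) t) + e ^+ 2 * edot t t.
Proof.
pose gap w := edot (X w - t) (X w - t) - dQ2 act (X w) t.
pose drift w := edot (X w) t - edot t t.
have int_gap : integrable gap.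
  exact: integrableB_EFin (integrable_edot_sub t) (integrable_dQ2 t).
have int_drift : integrable drift.
  exact: integrableB_EFin (integrable_edot t) (integrable_cst _).
pose bound w := dQ2 act (X w) t - e * gap w - 2 * e * drift w + e ^+ 2 * edot t t.
have int_bound1 : integrable (fun w => dQ2 act (X w) t - e * gap w).
  exact: integrableB_EFin (integrable_dQ2 t) (integrableZl_EFin e int_gap).
have int_bound2 : integrable (fun w => dQ2 act (X w) t - e * gap w - 2 * e * drift w).
  exact: integrableB_EFin int_bound1 (integrableZl_EFin (2 * e) int_drift).
have int_bound : integrable bound.
  exact: integrableD_EFin int_bound2 (integrable_cst (e ^+ 2 * edot t t)).
apply: le_trans (le_Rintegral measurableT (integrable_dQ2 _) int_bound _) _.
  by move=> w _; exact: (dQ2_scale_le act_iso).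
rewrite (RintegralD measurableT int_bound2 (integrable_cst _)).
rewrite (RintegralB measurableT int_bound1 (integrableZl_EFin (2 * e) int_drift)).
rewrite (RintegralB measurableT (integrable_dQ2 t) (integrableZl_EFin e int_gap)).
rewrite !RintegralZl ?integrable_cst //.
by rewrite Rintegral_edot_centered Rintegral_cst1 mulr0 subr0.
Qed.

End FrechetVariance.

Theorem mainTheorem1 (R : realType) (n : nat) (gT : finGroupType)
  (act : gT -> 'rV[R]_n -> 'rV[R]_n)
  (d : measure_display) (T : measurableType d) (P : probability T R)
  (X : T -> 'rV[R]_n) :
  is_group_action act -> act_linear act -> act_isometric act -> act_effective act ->
  random_vector X -> law_abs_cont P X -> finite_second_moment P X ->
  regular_point act (expect_vec P X) ->
  (0 < P [set w | ~ Cone act (expect_vec P X) (X w)])%E ->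
  ~ is_frechet_mean act P X (expect_vec P X).
Proof.
move=> act_group act_lin act_iso _ X_rv _ X_L2 _ notCone_gt0 t_mean.
set t := expect_vec P X in notCone_gt0 t_mean *.
have := cone_gap_gt0 act_group act_lin act_iso X_rv X_L2 notCone_gt0.
set kappa := \int[P]_w _ => kappa_gt0.
have [e e_gt0 e_small] : exists2 e, 0 < e & e * edot t t < kappa.
  exists (kappa / (edot t t + 1)); first by rewrite divr_gt0 // ltr_wpDl // edot_ge0.
  by rewrite mulrAC ltr_pdivrMr ?ltr_wpDl ?edot_ge0 // mulrDr mulr1 ltrDl.
have := t_mean ((1 + e) *: t); rewrite !frechet_FE // lee_fin.
have := Rintegral_dQ2_scale_le act_group act_lin act_iso X_rv X_L2 e.
rewrite -/kappa.
have : e * (e * edot t t) < e * kappa by rewrite ltr_pM2l.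
rewrite expr2 -mulrA; lra.
Qed.
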